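(* Let $\mathcal B$ be a connected building set on $[n+1]$ whose nested set complex $K_{\mathcal B}$ is a flag complex, and let $I\subseteq[n+1]$ have even cardinality. If the restricted building set $\mathcal B|_I$ has a connected component of odd cardinality, then $K^{\mathrm{odd}}_{\mathcal B|_I}$ is contractible (indeed a cone).
   Context: A building set on a finite set $S\subset\mathbb N$ is a collection $\mathcal B$ of nonempty subsets of $S$ containing every singleton, such that $I,J\in\mathcal B$, $I\cap J\neq\emptyset$ imply $I\cup J\in\mathcal B$; its connected components are its inclusion-maximal elements; it is connected if $S\in\mathcal B$; $\mathcal B|_I=\{J\in\mathcal B:J\subseteq I\}$. For a connected building set $\mathcal B$ on $[n+1]$, the nested set complex $K_{\mathcal B}$ is the simplicial complex on vertex set $\mathcal B\setminus\{[n+1]\}$ whose simplices are the subsets $N\subseteq\mathcal B\setminus\{[n+1]\}$ such that (i) any $I,J\in N$ satisfy $I\subseteq J$, $J\subseteq I$ or $I\cap J=\emptyset$, and (ii) for any $r\ge2$ pairwise disjoint $I_1,\dots,I_r\in N$, $I_1\cup\dots\cup I_r\notin\mathcal B$. A simplicial complex is flag if every set of vertices that are pairwise joined by edges forms a simplex. For $I\subseteq[n+1]$ of even cardinality, $K^{\mathrm{odd}}_{\mathcal B|_I}$ is the full subcomplex of $K_{\mathcal B}$ induced on the vertices $J\in\mathcal B$ with $J\subseteq I$ and $|J|$ odd. *)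

(* The ground set [n+1] is modelled by the finite type 'I_n.+1
   (a relabelling of {1,...,n+1}). *)
From mathcomp Require Import all_boot all_order.
Set Implicit Arguments. Unset Strict Implicit. Unset Printing Implicit Defensive.

Section BuildingSets.
Variable T : finType.
Implicit Types (B : {set {set T}}) (I J : {set T}) (N : {set {set T}}).

Definition building_set B : Prop :=
  (forall J, J \in B -> J != set0) /\
  (forall x : T, [set x] \in B) /\
  (forall I J, I \in B -> J \in B -> I :&: J != set0 -> I :|: J \in B).

Definition connected_bs B : Prop := [set: T] \in B.

Definition restrict B I : {set {set T}} := [set J in B | J \subset I].

Definition component B J : Prop :=
  J \in B /\ (forall J', J' \in B -> J \subset J' -> J' = J).

Definition nvertices B : {set {set T}} := B :\ [set: T].

Definition nested B N : Prop :=
  N \subset nvertices B /\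
  (forall I J, I \in N -> J \in N ->
      [|| I \subset J, J \subset I | [disjoint I & J]]) /\
  (forall M : {set {set T}}, M \subset N -> 2 <= #|M| ->
      (forall I J, I \in M -> J \in M -> I != J -> [disjoint I & J]) ->
      \bigcup_(J in M) J \notin B).

Definition flag_nested B : Prop :=
  forall N, N \subset nvertices B ->
    (forall I J, I \in N -> J \in N -> nested B [set I; J]) ->
    nested B N.

Definition odd_vertices B I : {set {set T}} :=
  [set J in nvertices B | (J \subset I) && odd #|J|].

Definition odd_simplex B I N : Prop :=
  nested B N /\ N \subset odd_vertices B I.

Definition is_cone (V : {set {set T}}) (simp : {set {set T}} -> Prop) : Prop :=
  exists2 v, v \in V & forall N, simp N -> simp (v |: N).

End BuildingSets.

(* Take an odd component C of B|_I. As |I| is even, C is a proper subset of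
   the ground set, hence an odd vertex. Maximality of C in B|_I forces every
   vertex J contained in I to be either contained in C (when they meet, as
   C ∪ J lies in B|_I) or disjoint from C with C ∪ J not in B; so {C, J} is
   always nested. By flagness, adding C to any odd simplex gives a simplex. *)
From mathcomp Require Import all_boot all_order.

Set Implicit Arguments.
Unset Strict Implicit.
Unset Printing Implicit Defensive.

Section NestedSets.
Variable T : finType.
Implicit Types (B : {set {set T}}) (I J C v : {set T}) (N M : {set {set T}}).

Lemma nestedS B N M : nested B N -> M \subset N -> nested B M.
Proof.
move=> [vN [cmpN unN]] sMN; split; first exact: subset_trans sMN vN.
split; first by move=> I J /(subsetP sMN) IN /(subsetP sMN) JN; apply: cmpN.
by move=> M' sM'M; apply: unN; apply: subset_trans sMN.
Qed.

Lemma nested1 B v : v \in nvertices B -> nested B [set v].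
Proof.
move=> vV; split; first by rewrite sub1set.
split; first by move=> I J /set1P-> /set1P->; rewrite subxx.
by move=> M sMv /leq_trans/(_ (subset_leq_card sMv)); rewrite cards1.
Qed.

Lemma nested2 B I J : building_set B -> I \in nvertices B -> J \in nvertices B ->
  [|| I \subset J, J \subset I | [disjoint I & J] && (I :|: J \notin B)] ->
  nested B [set I; J].
Proof.
move=> [neB _] IV JV cmpIJ; split; first by rewrite subUset !sub1set IV JV.
split.
  move=> X Y /set2P[]-> /set2P[]->; rewrite ?subxx //;
  case/or3P: cmpIJ => [->|->|/andP[dIJ _]]; rewrite ?orbT //;
  by rewrite ?dIJ ?orbT // disjoint_sym dIJ !orbT.
move=> M sMIJ M2 disjM.
have neqIJ : I != J.
  by move: (leq_trans M2 (subset_leq_card sMIJ)); rewrite cards2 ltnS lt0b.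
have eqM : M = [set I; J] by apply/eqP; rewrite eqEcard sMIJ cards2 neqIJ.
rewrite {}eqM in disjM *.
have dIJ : [disjoint I & J] by apply: disjM; rewrite ?set21 ?set22.
have nonempty K : K \in nvertices B -> K != set0.
  by rewrite inE => /andP[_ /neB].
rewrite bigcup_setU !big_set1.
case/or3P: cmpIJ => [/setIidPl sIJ|/setIidPr sJI|/andP[//]].
- by move: (nonempty _ IV); rewrite -sIJ setI_eq0 dIJ.
- by move: (nonempty _ JV); rewrite -sJI setI_eq0 dIJ.
Qed.

Lemma flag_nested_setU1 B v N : flag_nested B -> v \in nvertices B ->
  nested B N -> (forall J, J \in N -> nested B [set v; J]) ->
  nested B (v |: N).
Proof.
move=> flagB vV nN nvN; apply: flagB; first by rewrite subUset sub1set vV nN.1.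
move=> X Y /setU1P[->|XN] /setU1P[->|YN].
- by rewrite setUid; apply: nested1.
- exact: nvN.
- by rewrite setUC; apply: nvN.
- by apply: nestedS nN _; rewrite subUset !sub1set XN YN.
Qed.

Lemma component_restrict B I C :
  component (restrict B I) C -> C \in B /\ C \subset I.
Proof. by case; rewrite inE => /andP[]. Qed.

Lemma component_setU_sub B I C J : component (restrict B I) C ->
  J \subset I -> C :|: J \in B -> J \subset C.
Proof.
move=> compC JI CJB; have [[_ CI] [_ maxC]] := (component_restrict compC, compC).
have <- : C :|: J = C by apply: maxC; rewrite ?inE ?CJB ?subUset ?CI ?subsetUl.
exact: subsetUr.
Qed.

Lemma component_nested2 B I C J : building_set B ->
  component (restrict B I) C -> C \in nvertices B ->
  J \in nvertices B -> J \subset I -> nested B [set C; J].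
Proof.
move=> bsB compC CV JV JI; have [neB [_ unB]] := bsB.
have [CB _] := component_restrict compC.
have JB : J \in B by move: JV; rewrite inE => /andP[].
apply: nested2 => //; case dCJ: [disjoint C & J] => /=.
  have notCJ : C :|: J \notin B.
    apply/negP=> /(component_setU_sub compC JI) /setIidPr JC.
    by move: (neB J JB); rewrite -JC setI_eq0 dCJ.
  by rewrite notCJ !orbT.
by rewrite (component_setU_sub compC JI) ?orbT // unB // setI_eq0 dCJ.
Qed.

End NestedSets.

Theorem lemma5p3 (n : nat) (B : {set {set 'I_n.+1}}) (I : {set 'I_n.+1}) :
  building_set B -> connected_bs B -> flag_nested B ->
  ~~ odd #|I| ->
  (exists2 C, component (restrict B I) C & odd #|C|) ->
  is_cone (odd_vertices B I) (odd_simplex B I).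
Proof.
move=> bsB _ flagB evenI [C compC oddC].
have [CB CI] := component_restrict compC.
have CT : C != setT.
  by apply/eqP=> eqCT; move: CI evenI; rewrite eqCT subTset => /eqP->; rewrite -eqCT oddC.
have CV : C \in nvertices B by rewrite !inE CT CB.
have Codd : C \in odd_vertices B I by rewrite inE CV CI oddC.
exists C => // N [nN sN]; split; last by rewrite subUset sub1set Codd sN.
apply: flag_nested_setU1 => // J /(subsetP sN).
by rewrite inE => /andP[JV /andP[JI _]]; apply: component_nested2 compC CV JV JI.
Qed.
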